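(* Let $a,b,c,d\in\mathbb C$ and $$f=a(2x_1-x_2-x_3)(2x_2-x_3-x_1)(2x_3-x_1-x_2)+b(x_1-x_2)(x_2-x_3)(x_3-x_1)+c(x_1+x_2+x_3)^3+d(x_1^3+x_2^3+x_3^3-3x_1x_2x_3).$$ Then $f$ is completely reducible (a product of three linear forms) if and only if $a=b=c=0$ or $(27a^2+b^2)c+d^3=0$. In the first case, $$f=d(x_1+x_2+x_3)(x_1+\omega x_2+\omega^2x_3)(x_1+\omega^2x_2+\omega x_3).$$ In the second case, there exist $\alpha_1,\alpha_2,\gamma\in\mathbb C$ with $$\alpha_1^3=9a-i\sqrt3\,b,\quad \alpha_2^3=9a+i\sqrt3\,b,\quad -\alpha_1\alpha_2\gamma=3d,\quad \gamma^3=9c,$$ and for any such $\alpha_1,\alpha_2,\gamma$ we have $9f=A_xB_xC_x$, where $$A_x=\alpha_1(x_1+\omega^2x_2+\omega x_3)+\gamma(x_1+x_2+x_3)+\alpha_2(x_1+\omega x_2+\omega^2x_3),$$ $$B_x=\alpha_1(\omega^2x_1+\omega x_2+x_3)+\gamma(x_1+x_2+x_3)+\alpha_2(\omega x_1+\omega^2x_2+x_3),$$ $$C_x=\alpha_1(\omega x_1+x_2+\omega^2x_3)+\gamma(x_1+x_2+x_3)+\alpha_2(\omega^2x_1+x_2+\omega x_3).$$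
   Context: $\omega=e^{2\pi i/3}$. Every ternary cubic form over $\mathbb C$ invariant under even permutations of $x_1,x_2,x_3$ can be written in the displayed form. *)

From HB Require Import structures.
From mathcomp Require Import all_boot all_order all_algebra all_field.
From mathcomp Require Import mpoly.
Set Implicit Arguments. Unset Strict Implicit. Unset Printing Implicit Defensive.
Import Order.TTheory GRing.Theory Num.Theory.
Local Open Scope ring_scope.

(* The base field: an arbitrary algebraically closed numeric field C
   (e.g. the complex numbers); 'i, sqrtC, etc. come from numClosedFieldType. *)

Definition omega (C : numClosedFieldType) : C := (-1 + 'i * sqrtC 3) / 2.

Definition x1 (C : numClosedFieldType) : {mpoly C[3]} := 'X_(@Ordinal 3 0 isT).
Definition x2 (C : numClosedFieldType) : {mpoly C[3]} := 'X_(@Ordinal 3 1 isT).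
Definition x3 (C : numClosedFieldType) : {mpoly C[3]} := 'X_(@Ordinal 3 2 isT).

Definition linear_form (C : numClosedFieldType) (L : {mpoly C[3]}) : Prop :=
  exists l : 'I_3 -> C, L = \sum_(i < 3) l i *: 'X_i.

Definition completely_reducible (C : numClosedFieldType) (f : {mpoly C[3]}) : Prop :=
  exists L1 L2 L3 : {mpoly C[3]},
    [/\ linear_form L1, linear_form L2, linear_form L3 & f = L1 * L2 * L3].

Definition fcubic (C : numClosedFieldType) (a b c d : C) : {mpoly C[3]} :=
  let X1 := x1 C in let X2 := x2 C in let X3 := x3 C in
  a *: ((2 * X1 - X2 - X3) * (2 * X2 - X3 - X1) * (2 * X3 - X1 - X2))
  + b *: ((X1 - X2) * (X2 - X3) * (X3 - X1))
  + c *: ((X1 + X2 + X3) ^+ 3)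
  + d *: (X1 ^+ 3 + X2 ^+ 3 + X3 ^+ 3 - 3 * X1 * X2 * X3).

Definition Ax (C : numClosedFieldType) (al1 al2 ga : C) : {mpoly C[3]} :=
  let w := omega C in let X1 := x1 C in let X2 := x2 C in let X3 := x3 C in
  al1 *: (X1 + (w ^+ 2) *: X2 + w *: X3) + ga *: (X1 + X2 + X3)
  + al2 *: (X1 + w *: X2 + (w ^+ 2) *: X3).

Definition Bx (C : numClosedFieldType) (al1 al2 ga : C) : {mpoly C[3]} :=
  let w := omega C in let X1 := x1 C in let X2 := x2 C in let X3 := x3 C in
  al1 *: ((w ^+ 2) *: X1 + w *: X2 + X3) + ga *: (X1 + X2 + X3)
  + al2 *: (w *: X1 + (w ^+ 2) *: X2 + X3).

Definition Cx (C : numClosedFieldType) (al1 al2 ga : C) : {mpoly C[3]} :=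
  let w := omega C in let X1 := x1 C in let X2 := x2 C in let X3 := x3 C in
  al1 *: (w *: X1 + X2 + (w ^+ 2) *: X3) + ga *: (X1 + X2 + X3)
  + al2 *: ((w ^+ 2) *: X1 + X2 + w *: X3).

From HB Require Import structures.
From mathcomp Require Import all_boot all_order all_algebra all_field.
From mathcomp Require Import mpoly.
From mathcomp Require Import ring.
Import Order.TTheory GRing.Theory Num.Theory.
Local Open Scope ring_scope.

(* With w a primitive cube root of unity, the resolvents Y0 = x1 + x2 + x3,
   Y1 = x1 + w x2 + w^2 x3 and Y2 = x1 + w^2 x2 + w x3 put the cubic in Hesse form
     9 f = 9c Y0^3 + (9a + sb) Y1^3 + (9a - sb) Y2^3 + 9d Y0 Y1 Y2,  s = 2w + 1 = i sqrt 3.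
   Suppose a Hesse cubic P y0^3 + Q y1^3 + R y2^3 + S y0 y1 y2 with S^3 + 27PQR <> 0
   splits into three linear forms. A common zero of two factors is a singular point,
   and the singular points of such a cubic lie on coordinate axes with vanishing
   coefficient; no coordinate is killed by all three factors, so the three pairs of
   factors yield three distinct vanishing coefficients and P = Q = R = 0. For f this
   discriminant is 729 ((27a^2 + b^2) c + d^3).
   Conversely, u^3 + v^3 + z^3 - 3uvz = (u + v + z)(u + wv + w^2 z)(u + w^2 v + wz)
   with u = ga Y0, v = al1 Y2, z = al2 Y1, where al1, al2, ga are cube roots of the
   Hesse coefficients chosen with al1 al2 ga = -3d. *)

Definition ternary_cubic {R : comPzRingType} (a b c d x1 x2 x3 : R) : R :=
  a * ((2 * x1 - x2 - x3) * (2 * x2 - x3 - x1) * (2 * x3 - x1 - x2))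
  + b * ((x1 - x2) * (x2 - x3) * (x3 - x1))
  + c * (x1 + x2 + x3) ^+ 3
  + d * (x1 ^+ 3 + x2 ^+ 3 + x3 ^+ 3 - 3 * x1 * x2 * x3).

Lemma rmorph_ternary_cubic (R S : comPzRingType) (f : {rmorphism R -> S})
    (a b c d x1 x2 x3 : R) :
  f (ternary_cubic a b c d x1 x2 x3)
  = ternary_cubic (f a) (f b) (f c) (f d) (f x1) (f x2) (f x3).
Proof. by rewrite /ternary_cubic; ring. Qed.

Definition hesse_cubic {R : comPzRingType} (p q r s y0 y1 y2 : R) : R :=
  p * y0 ^+ 3 + q * y1 ^+ 3 + r * y2 ^+ 3 + s * y0 * y1 * y2.

Section PrimitiveCubeRootOfUnity.
Context {R : comPzRingType} {w : R}.
Hypothesis w_root : w ^+ 2 + w + 1 = 0.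

(* Identities in Z[w] are proved by exhibiting their cofactor of w^2 + w + 1. *)
Lemma eq_mod_w_root (k p q : R) : p = q + (w ^+ 2 + w + 1) * k -> p = q.
Proof. by rewrite w_root mul0r addr0. Qed.

Lemma sqr_2w1 : (2 * w + 1) ^+ 2 = -3.
Proof. by apply: (eq_mod_w_root 4); ring. Qed.

Lemma cube_norm_factor (u v z : R) :
  (u + v + z) * (u + w * v + w ^+ 2 * z) * (u + w ^+ 2 * v + w * z)
  = u ^+ 3 + v ^+ 3 + z ^+ 3 - 3 * u * v * z.
Proof.
apply: (eq_mod_w_root
  ((u + v + z) * (u * v + u * z + (w - 1) * (v ^+ 2 + z ^+ 2) + (w ^+ 2 - w + 1) * v * z))).
ring.
Qed.

Definition dft0 (x1 x2 x3 : R) := x1 + x2 + x3.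
Definition dft1 (x1 x2 x3 : R) := x1 + w * x2 + w ^+ 2 * x3.
Definition dft2 (x1 x2 x3 : R) := x1 + w ^+ 2 * x2 + w * x3.

Lemma dft1_rotr (x1 x2 x3 : R) : dft1 x3 x1 x2 = w * dft1 x1 x2 x3.
Proof. by apply: (eq_mod_w_root ((1 - w) * x3)); rewrite /dft1; ring. Qed.

Lemma dft2_rotr (x1 x2 x3 : R) : dft2 x3 x1 x2 = w ^+ 2 * dft2 x1 x2 x3.
Proof. by apply: (eq_mod_w_root ((1 - w) * x3 - (w ^+ 2 - w) * x2)); rewrite /dft2; ring. Qed.

Lemma dft1_rotl (x1 x2 x3 : R) : dft1 x2 x3 x1 = w ^+ 2 * dft1 x1 x2 x3.
Proof. by apply: (eq_mod_w_root ((1 - w) * x2 - (w ^+ 2 - w) * x3)); rewrite /dft1; ring. Qed.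

Lemma dft2_rotl (x1 x2 x3 : R) : dft2 x2 x3 x1 = w * dft2 x1 x2 x3.
Proof. by apply: (eq_mod_w_root ((1 - w) * x2)); rewrite /dft2; ring. Qed.

Lemma dft12_add (x1 x2 x3 : R) : dft1 x1 x2 x3 + dft2 x1 x2 x3 = 2 * x1 - x2 - x3.
Proof. by apply: (eq_mod_w_root (x2 + x3)); rewrite /dft1 /dft2; ring. Qed.

Lemma dft12_sub (x1 x2 x3 : R) : dft1 x1 x2 x3 - dft2 x1 x2 x3 = (2 * w + 1) * (x2 - x3).
Proof. by apply: (eq_mod_w_root (x3 - x2)); rewrite /dft1 /dft2; ring. Qed.

Lemma dft_inv0 (y0 y1 y2 : R) :
  dft0 (dft0 y0 y1 y2) (dft2 y0 y1 y2) (dft1 y0 y1 y2) = 3 * y0.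
Proof. by apply: (eq_mod_w_root (y1 + y2)); rewrite /dft0 /dft1 /dft2; ring. Qed.

Lemma dft_inv1 (y0 y1 y2 : R) :
  dft1 (dft0 y0 y1 y2) (dft2 y0 y1 y2) (dft1 y0 y1 y2) = 3 * y1.
Proof.
apply: (eq_mod_w_root (y0 + 2 * (w - 1) * y1 + (w ^+ 2 - w + 1) * y2)).
by rewrite /dft0 /dft1 /dft2; ring.
Qed.

Lemma dft_inv2 (y0 y1 y2 : R) :
  dft2 (dft0 y0 y1 y2) (dft2 y0 y1 y2) (dft1 y0 y1 y2) = 3 * y2.
Proof.
apply: (eq_mod_w_root (y0 + (w ^+ 2 - w + 1) * y1 + 2 * (w - 1) * y2)).
by rewrite /dft0 /dft1 /dft2; ring.
Qed.

Lemma cubic_a_termE (x1 x2 x3 : R) :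
  (2 * x1 - x2 - x3) * (2 * x2 - x3 - x1) * (2 * x3 - x1 - x2)
  = dft1 x1 x2 x3 ^+ 3 + dft2 x1 x2 x3 ^+ 3.
Proof.
rewrite -!dft12_add (dft1_rotr x1) (dft2_rotr x1) (dft1_rotl x1) (dft2_rotl x1).
set u := dft1 x1 x2 x3; set v := dft2 x1 x2 x3.
transitivity ((0 + u + v) * (0 + w * u + w ^+ 2 * v) * (0 + w ^+ 2 * u + w * v)); first ring.
by rewrite cube_norm_factor; ring.
Qed.

Lemma cubic_b_termE (x1 x2 x3 : R) :
  dft1 x1 x2 x3 ^+ 3 - dft2 x1 x2 x3 ^+ 3
  = -3 * (2 * w + 1) * ((x1 - x2) * (x2 - x3) * (x3 - x1)).
Proof.
set u := dft1 x1 x2 x3; set v := dft2 x1 x2 x3.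
transitivity ((0 + u + - v) * (0 + w * u + w ^+ 2 * - v) * (0 + w ^+ 2 * u + w * - v)).
  by rewrite cube_norm_factor; ring.
transitivity ((u - v) * (w * u - w ^+ 2 * v) * (w ^+ 2 * u - w * v)); first ring.
rewrite /u /v -dft1_rotr -dft2_rotr -dft1_rotl -dft2_rotl !dft12_sub -sqr_2w1.
ring.
Qed.

Lemma dft_prod (x1 x2 x3 : R) :
  dft0 x1 x2 x3 * dft1 x1 x2 x3 * dft2 x1 x2 x3
  = x1 ^+ 3 + x2 ^+ 3 + x3 ^+ 3 - 3 * x1 * x2 * x3.
Proof. exact: cube_norm_factor. Qed.

Lemma ternary_cubic_hesse (a b c d x1 x2 x3 : R) :
  9 * ternary_cubic a b c d x1 x2 x3
  = hesse_cubic (9 * c) (9 * a + (2 * w + 1) * b) (9 * a - (2 * w + 1) * b) (9 * d)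
      (dft0 x1 x2 x3) (dft1 x1 x2 x3) (dft2 x1 x2 x3).
Proof.
set bp := (x1 - x2) * (x2 - x3) * (x3 - x1).
have b_part : 9 * bp = (2 * w + 1) * (dft1 x1 x2 x3 ^+ 3 - dft2 x1 x2 x3 ^+ 3).
  rewrite cubic_b_termE; transitivity (-3 * (2 * w + 1) ^+ 2 * bp); last by rewrite /bp; ring.
  by rewrite sqr_2w1; ring.
transitivity (9 * c * (x1 + x2 + x3) ^+ 3 + 9 * a * ((2 * x1 - x2 - x3) * (2 * x2 - x3 - x1)
  * (2 * x3 - x1 - x2)) + b * (9 * bp) + 9 * d * (x1 ^+ 3 + x2 ^+ 3 + x3 ^+ 3 - 3 * x1 * x2 * x3)).
  by rewrite /ternary_cubic /bp; ring.
by rewrite b_part cubic_a_termE -dft_prod /hesse_cubic /dft0; ring.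
Qed.

Lemma ternary_cubic_dft_coords (a b c d y0 y1 y2 : R) :
  9 * ternary_cubic a b c d (dft0 y0 y1 y2) (dft2 y0 y1 y2) (dft1 y0 y1 y2)
  = 9 * hesse_cubic (27 * c) (3 * (9 * a + (2 * w + 1) * b))
          (3 * (9 * a - (2 * w + 1) * b)) (27 * d) y0 y1 y2.
Proof. by rewrite ternary_cubic_hesse dft_inv0 dft_inv1 dft_inv2 /hesse_cubic; ring. Qed.

Lemma ternary_cubic_d_only (d x1 x2 x3 : R) :
  ternary_cubic 0 0 0 d x1 x2 x3 = d * (dft0 x1 x2 x3 * dft1 x1 x2 x3 * dft2 x1 x2 x3).
Proof. by rewrite dft_prod /ternary_cubic; ring. Qed.

Definition resolvent_form (al1 al2 ga x1 x2 x3 : R) :=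
  al1 * dft2 x1 x2 x3 + ga * dft0 x1 x2 x3 + al2 * dft1 x1 x2 x3.

Lemma ternary_cubic_resolvent_factor (a b c d al1 al2 ga x1 x2 x3 : R) :
  al1 ^+ 3 = 9 * a - (2 * w + 1) * b -> al2 ^+ 3 = 9 * a + (2 * w + 1) * b ->
  al1 * al2 * ga = - (3 * d) -> ga ^+ 3 = 9 * c ->
  9 * ternary_cubic a b c d x1 x2 x3
  = resolvent_form al1 al2 ga x1 x2 x3 * resolvent_form al1 al2 ga x3 x1 x2
    * resolvent_form al1 al2 ga x2 x3 x1.
Proof.
move=> al1E al2E prodE gaE.
rewrite /resolvent_form (dft1_rotr x1) (dft2_rotr x1) (dft1_rotl x1) (dft2_rotl x1).
set Y0 := dft0 x1 x2 x3; set Y1 := dft1 x1 x2 x3; set Y2 := dft2 x1 x2 x3.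
transitivity ((ga * Y0 + al1 * Y2 + al2 * Y1) * (ga * Y0 + w * (al1 * Y2) + w ^+ 2 * (al2 * Y1))
  * (ga * Y0 + w ^+ 2 * (al1 * Y2) + w * (al2 * Y1))); last by rewrite /Y0 /dft0; ring.
rewrite cube_norm_factor ternary_cubic_hesse /hesse_cubic -/Y0 -/Y1 -/Y2 !exprMn al1E al2E gaE.
transitivity (9 * c * Y0 ^+ 3 + (9 * a + (2 * w + 1) * b) * Y1 ^+ 3
  + (9 * a - (2 * w + 1) * b) * Y2 ^+ 3 - 3 * (al1 * al2 * ga) * Y0 * Y1 * Y2); last ring.
by rewrite prodE; ring.
Qed.

End PrimitiveCubeRootOfUnity.

Arguments dft1 {R} w.
Arguments dft2 {R} w.
Arguments resolvent_form {R} w.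

Definition lform {R : comPzRingType} (l0 l1 l2 y0 y1 y2 : R) : R := l0 * y0 + l1 * y1 + l2 * y2.

Section HesseCubicSplitting.
Context {F : numDomainType}.

Lemma lform_zero (a0 a1 a2 : F) :
  exists y0 y1 y2, [|| y0 != 0, y1 != 0 | y2 != 0] /\ lform a0 a1 a2 y0 y1 y2 = 0.
Proof.
have [a0_0|a0_nz] := eqVneq a0 0.
  by exists 1, 0, 0; rewrite oner_neq0 /lform a0_0; split=> //; ring.
by exists a1, (- a0), 0; rewrite oppr_eq0 a0_nz orbT /lform; split=> //; ring.
Qed.

Lemma lform_common_zero (a0 a1 a2 b0 b1 b2 : F) :
  exists y0 y1 y2, [/\ [|| y0 != 0, y1 != 0 | y2 != 0],
    lform a0 a1 a2 y0 y1 y2 = 0 & lform b0 b1 b2 y0 y1 y2 = 0].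
Proof.
pose c0 := a1 * b2 - a2 * b1; pose c1 := a2 * b0 - a0 * b2; pose c2 := a0 * b1 - a1 * b0.
have [cross_nz|] := boolP [|| c0 != 0, c1 != 0 | c2 != 0].
  by exists c0, c1, c2; split; rewrite // /lform /c0 /c1 /c2; ring.
rewrite !negb_or !negbK => /and3P[/eqP c0_0 /eqP c1_0 /eqP c2_0].
have [a_0|a_nz] := boolP [&& a0 == 0, a1 == 0 & a2 == 0].
  have [y0 [y1 [y2 [y_nz by_0]]]] := lform_zero b0 b1 b2.
  case/and3P: a_0 => /eqP a0_0 /eqP a1_0 /eqP a2_0.
  by exists y0, y1, y2; split; rewrite // /lform a0_0 a1_0 a2_0; ring.
have [y0 [y1 [y2 [y_nz ay_0]]]] := lform_zero a0 a1 a2.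
exists y0, y1, y2; split => //.
(* the vanishing cross product makes [b] proportional to [a] *)
have [ab0 ab1 ab2] : [/\ a0 * lform b0 b1 b2 y0 y1 y2 = 0, a1 * lform b0 b1 b2 y0 y1 y2 = 0
                     & a2 * lform b0 b1 b2 y0 y1 y2 = 0].
  split.
  - transitivity (b0 * lform a0 a1 a2 y0 y1 y2 + (c2 * y1 - c1 * y2)).
      by rewrite /lform /c1 /c2; ring.
    by rewrite ay_0 c1_0 c2_0; ring.
  - transitivity (b1 * lform a0 a1 a2 y0 y1 y2 + (c0 * y2 - c2 * y0)).
      by rewrite /lform /c0 /c2; ring.
    by rewrite ay_0 c0_0 c2_0; ring.
  - transitivity (b2 * lform a0 a1 a2 y0 y1 y2 + (c1 * y0 - c0 * y1)).
      by rewrite /lform /c0 /c1; ring.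
    by rewrite ay_0 c0_0 c1_0; ring.
apply/eqP; apply: contraNT a_nz => by_nz.
by apply/and3P; split; apply/eqP; apply: (mulIf by_nz); rewrite mul0r.
Qed.

Lemma hesse_critical_axis {P Q R S y0 y1 y2 : F} :
  S ^+ 3 + 27 * P * Q * R != 0 -> [|| y0 != 0, y1 != 0 | y2 != 0] ->
  3 * P * y0 ^+ 2 + S * y1 * y2 = 0 -> 3 * Q * y1 ^+ 2 + S * y0 * y2 = 0 ->
  3 * R * y2 ^+ 2 + S * y0 * y1 = 0 ->
  [\/ [/\ y0 != 0, y1 = 0, y2 = 0 & P = 0], [/\ y1 != 0, y0 = 0, y2 = 0 & Q = 0]
    | [/\ y2 != 0, y0 = 0, y1 = 0 & R = 0]].
Proof.
move=> nondeg y_nz E0 E1 E2.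
have coef_eq0 (x y : F) : y != 0 -> 3 * x * y ^+ 2 = 0 -> x = 0.
  move=> y_neq0 /eqP; rewrite !mulf_eq0 pnatr_eq0 (negPf y_neq0) !orbF.
  by move/eqP.
have S_eq0 (y y' : F) : y != 0 -> y' != 0 -> S * y * y' = 0 -> S = 0.
  by move=> yn yn' /eqP; rewrite !mulf_eq0 (negPf yn) (negPf yn') !orbF => /eqP.
have PQR_neq0 : S = 0 -> P * Q * R != 0.
  move=> S0; apply: contraNneq nondeg => PQR0; apply/eqP.
  by transitivity (S ^+ 3 + 27 * (P * Q * R)); [ring | rewrite S0 PQR0; ring].
have [z0|z0] := eqVneq y0 0; have [z1|z1] := eqVneq y1 0; have [z2|z2] := eqVneq y2 0;
  rewrite ?z0 ?z1 ?z2 ?(expr0n, mulr0, mul0r, addr0, add0r) /= in E0 E1 E2.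
- by move: y_nz; rewrite z0 z1 z2 eqxx.
- by constructor 3; split=> //; apply: coef_eq0 E2.
- by constructor 2; split=> //; apply: coef_eq0 E1.
- by case/eqP: (PQR_neq0 (S_eq0 _ _ z1 z2 E0)); rewrite (coef_eq0 _ _ z1 E1) !(mulr0, mul0r).
- by constructor 1; split=> //; apply: coef_eq0 E0.
- by case/eqP: (PQR_neq0 (S_eq0 _ _ z0 z2 E1)); rewrite (coef_eq0 _ _ z0 E0) !(mulr0, mul0r).
- by case/eqP: (PQR_neq0 (S_eq0 _ _ z0 z1 E2)); rewrite (coef_eq0 _ _ z0 E0) !(mulr0, mul0r).
(* multiplying the three equations gives (S^3 + 27PQR) (y0 y1 y2)^2 = 0 *)
case/eqP: nondeg; apply: (@mulIf _ ((y0 * y1 * y2) ^+ 2)).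
  by rewrite expf_neq0 // !mulf_neq0.
transitivity ((3 * P * y0 ^+ 2 + S * y1 * y2 - S * y1 * y2)
  * (3 * Q * y1 ^+ 2 + S * y0 * y2 - S * y0 * y2)
  * (3 * R * y2 ^+ 2 + S * y0 * y1 - S * y0 * y1) + S ^+ 3 * (y0 * y1 * y2) ^+ 2); first ring.
by rewrite E0 E1 E2; ring.
Qed.

Section Factors.
Context {P Q R S a0 a1 a2 b0 b1 b2 e0 e1 e2 : F}.
Hypothesis hesse_split : forall y0 y1 y2, hesse_cubic P Q R S y0 y1 y2
  = lform a0 a1 a2 y0 y1 y2 * lform b0 b1 b2 y0 y1 y2 * lform e0 e1 e2 y0 y1 y2.

Lemma hesse_split_grad_eq0 {y0 y1 y2 : F} :
  lform a0 a1 a2 y0 y1 y2 = 0 -> lform b0 b1 b2 y0 y1 y2 = 0 ->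
  [/\ 3 * P * y0 ^+ 2 + S * y1 * y2 = 0, 3 * Q * y1 ^+ 2 + S * y0 * y2 = 0
    & 3 * R * y2 ^+ 2 + S * y0 * y1 = 0].
Proof.
move=> ay_0 by_0.
have grad_dir (v0 v1 v2 : F) : v0 * (3 * P * y0 ^+ 2 + S * y1 * y2)
    + v1 * (3 * Q * y1 ^+ 2 + S * y0 * y2) + v2 * (3 * R * y2 ^+ 2 + S * y0 * y1) = 0.
  pose G t := hesse_cubic P Q R S (y0 + t * v0) (y1 + t * v1) (y2 + t * v2)
    - lform a0 a1 a2 (y0 + t * v0) (y1 + t * v1) (y2 + t * v2)
      * lform b0 b1 b2 (y0 + t * v0) (y1 + t * v1) (y2 + t * v2)
      * lform e0 e1 e2 (y0 + t * v0) (y1 + t * v1) (y2 + t * v2).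
  have G_0 t : G t = 0 by rewrite /G hesse_split subrr.
  apply: (@mulfI _ 6); first by rewrite pnatr_eq0.
  (* the finite difference 6 G(1) - 2 G(-1) - G(2) - 3 G(0) extracts 6 times the
     linear coefficient of the cubic polynomial G *)
  transitivity (6 * G 1 - 2 * G (-1) - G 2 - 3 * G 0
    + 6 * (lform a0 a1 a2 y0 y1 y2 * lform b0 b1 b2 y0 y1 y2 * lform e0 e1 e2 v0 v1 v2
         + lform a0 a1 a2 y0 y1 y2 * lform b0 b1 b2 v0 v1 v2 * lform e0 e1 e2 y0 y1 y2
         + lform a0 a1 a2 v0 v1 v2 * lform b0 b1 b2 y0 y1 y2 * lform e0 e1 e2 y0 y1 y2)).
    by rewrite /G /hesse_cubic /lform; ring.
  by rewrite !G_0 ay_0 by_0; ring.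
have := grad_dir 1 0 0; have := grad_dir 0 1 0; have := grad_dir 0 0 1.
by rewrite !(mul1r, mul0r, addr0, add0r) => E2 E1 E0.
Qed.

Lemma hesse_split_column0 : a0 = 0 -> b0 = 0 -> e0 = 0 -> S ^+ 3 + 27 * P * Q * R = 0.
Proof.
move=> a0_0 b0_0 e0_0.
have P_0 : P = 0.
  transitivity (hesse_cubic P Q R S 1 0 0); first by rewrite /hesse_cubic; ring.
  by rewrite hesse_split /lform a0_0; ring.
have S_0 : S = 0.
  apply: (@mulfI _ 2); first by rewrite pnatr_eq0.
  transitivity (hesse_cubic P Q R S 1 1 1 - hesse_cubic P Q R S (-1) 1 1 - 2 * P).
    by rewrite /hesse_cubic; ring.
  by rewrite !hesse_split /lform a0_0 b0_0 e0_0 P_0; ring.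
by rewrite P_0 S_0; ring.
Qed.

Lemma hesse_split_column1 : a1 = 0 -> b1 = 0 -> e1 = 0 -> S ^+ 3 + 27 * P * Q * R = 0.
Proof.
move=> a1_0 b1_0 e1_0.
have Q_0 : Q = 0.
  transitivity (hesse_cubic P Q R S 0 1 0); first by rewrite /hesse_cubic; ring.
  by rewrite hesse_split /lform a1_0; ring.
have S_0 : S = 0.
  apply: (@mulfI _ 2); first by rewrite pnatr_eq0.
  transitivity (hesse_cubic P Q R S 1 1 1 - hesse_cubic P Q R S 1 (-1) 1 - 2 * Q).
    by rewrite /hesse_cubic; ring.
  by rewrite !hesse_split /lform a1_0 b1_0 e1_0 Q_0; ring.
by rewrite Q_0 S_0; ring.
Qed.

Lemma hesse_split_column2 : a2 = 0 -> b2 = 0 -> e2 = 0 -> S ^+ 3 + 27 * P * Q * R = 0.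
Proof.
move=> a2_0 b2_0 e2_0.
have R_0 : R = 0.
  transitivity (hesse_cubic P Q R S 0 0 1); first by rewrite /hesse_cubic; ring.
  by rewrite hesse_split /lform a2_0; ring.
have S_0 : S = 0.
  apply: (@mulfI _ 2); first by rewrite pnatr_eq0.
  transitivity (hesse_cubic P Q R S 1 1 1 - hesse_cubic P Q R S 1 1 (-1) - 2 * R).
    by rewrite /hesse_cubic; ring.
  by rewrite !hesse_split /lform a2_0 b2_0 e2_0 R_0; ring.
by rewrite R_0 S_0; ring.
Qed.

Lemma hesse_split_pair : S ^+ 3 + 27 * P * Q * R != 0 ->
  [\/ [/\ P = 0, a0 = 0 & b0 = 0], [/\ Q = 0, a1 = 0 & b1 = 0] | [/\ R = 0, a2 = 0 & b2 = 0]].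
Proof.
move=> nondeg.
have [y0 [y1 [y2 [y_nz ay_0 by_0]]]] := lform_common_zero a0 a1 a2 b0 b1 b2.
have [E0 E1 E2] := hesse_split_grad_eq0 ay_0 by_0.
have coef_eq0 (l y : F) : y != 0 -> l * y = 0 -> l = 0.
  by move=> y_neq0 /eqP; rewrite mulf_eq0 (negPf y_neq0) orbF => /eqP.
case: (hesse_critical_axis nondeg y_nz E0 E1 E2) => [[n0 z1 z2 ->]|[n1 z0 z2 ->]|[n2 z0 z1 ->]];
  move: ay_0 by_0; rewrite /lform ?z0 ?z1 ?z2 !mulr0 ?addr0 ?add0r => ay_0 by_0.
- by constructor 1; split; [|exact: coef_eq0 ay_0|exact: coef_eq0 by_0].
- by constructor 2; split; [|exact: coef_eq0 ay_0|exact: coef_eq0 by_0].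
- by constructor 3; split; [|exact: coef_eq0 ay_0|exact: coef_eq0 by_0].
Qed.

End Factors.

Lemma hesse_split_degenerate {P Q R S a0 a1 a2 b0 b1 b2 e0 e1 e2 : F} :
  (forall y0 y1 y2, hesse_cubic P Q R S y0 y1 y2
     = lform a0 a1 a2 y0 y1 y2 * lform b0 b1 b2 y0 y1 y2 * lform e0 e1 e2 y0 y1 y2) ->
  S ^+ 3 + 27 * P * Q * R = 0 \/ [/\ P = 0, Q = 0 & R = 0].
Proof.
move=> split_abe.
have [|nondeg] := eqVneq (S ^+ 3 + 27 * P * Q * R) 0; [by left | right].
have split_aeb y0 y1 y2 : hesse_cubic P Q R S y0 y1 y2
    = lform a0 a1 a2 y0 y1 y2 * lform e0 e1 e2 y0 y1 y2 * lform b0 b1 b2 y0 y1 y2.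
  by rewrite split_abe; ring.
have split_bea y0 y1 y2 : hesse_cubic P Q R S y0 y1 y2
    = lform b0 b1 b2 y0 y1 y2 * lform e0 e1 e2 y0 y1 y2 * lform a0 a1 a2 y0 y1 y2.
  by rewrite split_abe; ring.
have col0 := hesse_split_column0 split_abe; have col1 := hesse_split_column1 split_abe.
have col2 := hesse_split_column2 split_abe.
(* each pair of factors shares a vanishing column with a vanishing Hesse coefficient;
   as no column vanishes in all three factors, the three columns are distinct *)
case: (hesse_split_pair split_abe nondeg) => [[? ? ?]|[? ? ?]|[? ? ?]];
case: (hesse_split_pair split_aeb nondeg) => [[? ? ?]|[? ? ?]|[? ? ?]];
case: (hesse_split_pair split_bea nondeg) => [[? ? ?]|[? ? ?]|[? ? ?]];
  first [ by split | case/eqP: nondeg; first [by apply: col0 | by apply: col1 | by apply: col2] ].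
Qed.

End HesseCubicSplitting.

Lemma cube_roots_prod {D : numClosedFieldType} {u v z e : D} : u * v * z = e ^+ 3 ->
  exists al be ga : D, [/\ al ^+ 3 = u, be ^+ 3 = v, ga ^+ 3 = z & al * be * ga = e].
Proof.
move=> uvzE.
have cube_root (x : D) : exists y, y ^+ 3 = x by exists (3.-root x); apply: rootCK.
have [al alE] := cube_root u; have [be beE] := cube_root v; have [ga gaE] := cube_root z.
have [alga_0|alga_nz] := eqVneq (al * ga) 0.
  exists al, be, ga; split=> //.
  have : e ^+ 3 = 0.
    by rewrite -uvzE -alE -beE -gaE; transitivity ((al * ga) ^+ 3 * be ^+ 3); [ring | rewrite alga_0; ring].
  by move/eqP; rewrite expf_eq0 /= => /eqP->; rewrite mulrAC alga_0 mul0r.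
exists al, (e / (al * ga)), ga; split=> //.
  rewrite expr_div_n -uvzE exprMn alE gaE.
  have uz_nz : u * z != 0 by rewrite -alE -gaE -exprMn expf_neq0.
  by rewrite [u * v * z](_ : _ = v * (u * z)) ?mulfK //; ring.
by rewrite mulrAC mulrC divfK.
Qed.

Local Notation i0 := (@Ordinal 3 0 isT).
Local Notation i1 := (@Ordinal 3 1 isT).
Local Notation i2 := (@Ordinal 3 2 isT).

Lemma sum_ord3 (V : nmodType) (F : 'I_3 -> V) : \sum_(i < 3) F i = F i0 + F i1 + F i2.
Proof.
rewrite !big_ord_recr big_ord0 /= add0r.
by congr (F _ + F _ + F _); apply: val_inj.
Qed.

Section LinearForms.
Variable C : numClosedFieldType.

Lemma linear_formD (L L' : {mpoly C[3]}) :
  linear_form L -> linear_form L' -> linear_form (L + L').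
Proof.
case=> l -> [l' ->]; exists (fun i => l i + l' i).
by rewrite -big_split; apply: eq_bigr => i _; rewrite scalerDl.
Qed.

Lemma linear_formZ (k : C) (L : {mpoly C[3]}) : linear_form L -> linear_form (k *: L).
Proof.
case=> l ->; exists (fun i => k * l i).
by rewrite scaler_sumr; apply: eq_bigr => i _; rewrite scalerA.
Qed.

Lemma linear_formX (i : 'I_3) : linear_form ('X_i : {mpoly C[3]}).
Proof.
exists (fun j => (j == i)%:R).
rewrite (bigD1 i) //= eqxx scale1r big1 ?addr0 // => j /negPf->.
by rewrite scale0r.
Qed.

Lemma meval_lform (v l : 'I_3 -> C) :
  meval v (\sum_(i < 3) l i *: 'X_i) = lform (l i0) (l i1) (l i2) (v i0) (v i1) (v i2).
Proof. by rewrite sum_ord3 !mevalD !mevalZ !mevalXU. Qed.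

End LinearForms.

Ltac linear_form_tac :=
  repeat (apply: linear_formD || apply: linear_formZ || apply: linear_formX).

Section OmegaCubic.
Context {C : numClosedFieldType}.
Local Notation w := (omega C).

Lemma sqrt_neg3E : 'i * sqrtC 3 = 2 * w + 1 :> C.
Proof. by rewrite /omega; field. Qed.

Lemma omega_root : w ^+ 2 + w + 1 = 0.
Proof.
apply: (@mulfI _ 4); first by rewrite pnatr_eq0.
transitivity ((2 * w + 1) ^+ 2 + 3); first ring.
by rewrite -sqrt_neg3E exprMn sqrCi sqrtCK; ring.
Qed.

Lemma mpoly_omega_root : (w%:MP : {mpoly C[3]}) ^+ 2 + w%:MP + 1 = 0.
Proof. by transitivity ((w ^+ 2 + w + 1)%:MP : {mpoly C[3]}); [ring | rewrite omega_root]. Qed.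

Lemma fcubicE (a b c d : C) :
  fcubic a b c d = ternary_cubic a%:MP b%:MP c%:MP d%:MP (x1 C) (x2 C) (x3 C).
Proof. by rewrite /fcubic /ternary_cubic -!mul_mpolyC. Qed.

Lemma meval_fcubic (v : 'I_3 -> C) (a b c d : C) :
  meval v (fcubic a b c d) = ternary_cubic a b c d (v i0) (v i1) (v i2).
Proof. by rewrite fcubicE rmorph_ternary_cubic /= !mevalC !mevalXU. Qed.

Lemma completely_reducible_fcubic_cond (a b c d : C) :
  completely_reducible (fcubic a b c d) ->
  (a = 0 /\ b = 0 /\ c = 0) \/ (27 * a ^+ 2 + b ^+ 2) * c + d ^+ 3 = 0.
Proof.
case=> _ [_ [_ [[l1 ->] [l2 ->] [l3 ->] fE]]].
have split_hesse y0 y1 y2 :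
  hesse_cubic (27 * c) (3 * (9 * a + (2 * w + 1) * b)) (3 * (9 * a - (2 * w + 1) * b))
    (27 * d) y0 y1 y2
  = lform (dft0 (l1 i0) (l1 i1) (l1 i2)) (dft2 w (l1 i0) (l1 i1) (l1 i2))
      (dft1 w (l1 i0) (l1 i1) (l1 i2)) y0 y1 y2
    * lform (dft0 (l2 i0) (l2 i1) (l2 i2)) (dft2 w (l2 i0) (l2 i1) (l2 i2))
      (dft1 w (l2 i0) (l2 i1) (l2 i2)) y0 y1 y2
    * lform (dft0 (l3 i0) (l3 i1) (l3 i2)) (dft2 w (l3 i0) (l3 i1) (l3 i2))
      (dft1 w (l3 i0) (l3 i1) (l3 i2)) y0 y1 y2.
  apply: (@mulfI _ 9); first by rewrite pnatr_eq0.
  rewrite -(ternary_cubic_dft_coords omega_root).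
  pose v (i : 'I_3) := [:: dft0 y0 y1 y2; dft2 w y0 y1 y2; dft1 w y0 y1 y2]`_i.
  have := congr1 (meval v) fE; rewrite meval_fcubic !mevalM !meval_lform /v /= => ->.
  by rewrite /lform /dft0 /dft1 /dft2; ring.
have sq := sqr_2w1 omega_root.
have nat_mul_eq0 (n : nat) (x : C) : n.+1%:R * x = 0 -> x = 0.
  by move/eqP; rewrite mulf_eq0 pnatr_eq0 => /eqP.
case: (hesse_split_degenerate split_hesse) => [disc_0|[c_0 Q_0 R_0]].
  right; apply: (@mulfI _ (27 ^+ 3)); first by rewrite expf_neq0 // pnatr_eq0.
  transitivity ((27 * d) ^+ 3 + 27 * (27 * c) * (3 * (9 * a + (2 * w + 1) * b))
    * (3 * (9 * a - (2 * w + 1) * b)) + 27 ^+ 2 * 9 * c * b ^+ 2 * ((2 * w + 1) ^+ 2 + 3)).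
    ring.
  by rewrite disc_0 sq; ring.
left.
have {}Q_0 := nat_mul_eq0 _ _ Q_0; have {}R_0 := nat_mul_eq0 _ _ R_0.
have a_0 : a = 0.
  apply: (nat_mul_eq0 17); transitivity ((9 * a + (2 * w + 1) * b) + (9 * a - (2 * w + 1) * b)).
    ring.
  by rewrite Q_0 R_0 addr0.
split=> //; split; last exact: nat_mul_eq0 c_0.
move: Q_0; rewrite a_0 mulr0 add0r => /eqP; rewrite mulf_eq0 => /orP[/eqP s_0|/eqP //].
by move: sq; rewrite s_0 expr0n /= => /eqP; rewrite eq_sym oppr_eq0 pnatr_eq0.
Qed.

Lemma fcubic_d_only (d : C) :
  fcubic 0 0 0 d = d *: ((x1 C + x2 C + x3 C) * (x1 C + w *: x2 C + (w ^+ 2) *: x3 C)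
                         * (x1 C + (w ^+ 2) *: x2 C + w *: x3 C)).
Proof.
rewrite fcubicE mpolyC0 (ternary_cubic_d_only mpoly_omega_root) -!mul_mpolyC.
by rewrite /dft0 /dft1 /dft2; ring.
Qed.

Lemma resolvent_coeffs {a b c d : C} : (27 * a ^+ 2 + b ^+ 2) * c + d ^+ 3 = 0 ->
  exists al1 al2 ga : C,
    [/\ al1 ^+ 3 = 9 * a - (2 * w + 1) * b, al2 ^+ 3 = 9 * a + (2 * w + 1) * b,
        - (al1 * al2 * ga) = 3 * d & ga ^+ 3 = 9 * c].
Proof.
move=> disc_0.
have prodE : (9 * a - (2 * w + 1) * b) * (9 * a + (2 * w + 1) * b) * (9 * c) = (- (3 * d)) ^+ 3.
  transitivity (27 * ((27 * a ^+ 2 + b ^+ 2) * c + d ^+ 3) - 27 * d ^+ 3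
    - 9 * c * b ^+ 2 * ((2 * w + 1) ^+ 2 + 3)); first ring.
  by rewrite disc_0 (sqr_2w1 omega_root); ring.
have [al1 [al2 [ga [al1E al2E gaE prod]]]] := cube_roots_prod prodE.
by exists al1, al2, ga; rewrite prod opprK.
Qed.

Lemma AxE (al1 al2 ga : C) :
  Ax al1 al2 ga = resolvent_form w%:MP al1%:MP al2%:MP ga%:MP (x1 C) (x2 C) (x3 C).
Proof. by rewrite /Ax /resolvent_form /dft0 /dft1 /dft2 -!mul_mpolyC; ring. Qed.

Lemma BxE (al1 al2 ga : C) :
  Bx al1 al2 ga = resolvent_form w%:MP al1%:MP al2%:MP ga%:MP (x3 C) (x1 C) (x2 C).
Proof. by rewrite /Bx /resolvent_form /dft0 /dft1 /dft2 -!mul_mpolyC; ring. Qed.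

Lemma CxE (al1 al2 ga : C) :
  Cx al1 al2 ga = resolvent_form w%:MP al1%:MP al2%:MP ga%:MP (x2 C) (x3 C) (x1 C).
Proof. by rewrite /Cx /resolvent_form /dft0 /dft1 /dft2 -!mul_mpolyC; ring. Qed.

Lemma fcubic_resolvent_factor {a b c d al1 al2 ga : C} :
  al1 ^+ 3 = 9 * a - (2 * w + 1) * b -> al2 ^+ 3 = 9 * a + (2 * w + 1) * b ->
  - (al1 * al2 * ga) = 3 * d -> ga ^+ 3 = 9 * c ->
  9 *: fcubic a b c d = Ax al1 al2 ga * Bx al1 al2 ga * Cx al1 al2 ga.
Proof.
move=> al1E al2E prodE gaE.
rewrite AxE BxE CxE -mul_mpolyC mpolyC_nat fcubicE.
apply: (ternary_cubic_resolvent_factor mpoly_omega_root).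
- by rewrite -rmorphXn al1E; ring.
- by rewrite -rmorphXn al2E; ring.
- by rewrite -!rmorphM -[al1 * al2 * ga]opprK prodE; ring.
- by rewrite -rmorphXn gaE; ring.
Qed.

End OmegaCubic.

Theorem theorem11p1 (C : numClosedFieldType) (a b c d : C) :
  (completely_reducible (fcubic a b c d) <->
     ((a = 0 /\ b = 0 /\ c = 0) \/ (27 * a ^+ 2 + b ^+ 2) * c + d ^+ 3 = 0))
  /\ ((a = 0 /\ b = 0 /\ c = 0) ->
        fcubic a b c d =
        d *: ((x1 C + x2 C + x3 C)
              * (x1 C + omega C *: x2 C + (omega C ^+ 2) *: x3 C)
              * (x1 C + (omega C ^+ 2) *: x2 C + omega C *: x3 C)))
  /\ ((27 * a ^+ 2 + b ^+ 2) * c + d ^+ 3 = 0 ->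
        (exists al1 al2 ga : C,
            [/\ al1 ^+ 3 = 9 * a - 'i * sqrtC 3 * b,
                al2 ^+ 3 = 9 * a + 'i * sqrtC 3 * b,
                - (al1 * al2 * ga) = 3 * d
              & ga ^+ 3 = 9 * c])
        /\ (forall al1 al2 ga : C,
              al1 ^+ 3 = 9 * a - 'i * sqrtC 3 * b ->
              al2 ^+ 3 = 9 * a + 'i * sqrtC 3 * b ->
              - (al1 * al2 * ga) = 3 * d ->
              ga ^+ 3 = 9 * c ->
              9 *: fcubic a b c d = Ax al1 al2 ga * Bx al1 al2 ga * Cx al1 al2 ga)).
Proof.
rewrite sqrt_neg3E.
have d_only : a = 0 /\ b = 0 /\ c = 0 -> fcubic a b c d = d *: ((x1 C + x2 C + x3 C)
    * (x1 C + omega C *: x2 C + (omega C ^+ 2) *: x3 C)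
    * (x1 C + (omega C ^+ 2) *: x2 C + omega C *: x3 C)).
  by case=> -> [-> ->]; apply: fcubic_d_only.
split; last by split=> // disc_0; split; [apply: resolvent_coeffs | move=> al1 al2 ga; apply: fcubic_resolvent_factor].
split; first exact: completely_reducible_fcubic_cond.
case=> [abc_0|disc_0].
  exists (d *: (x1 C + x2 C + x3 C)), (x1 C + omega C *: x2 C + (omega C ^+ 2) *: x3 C),
    (x1 C + (omega C ^+ 2) *: x2 C + omega C *: x3 C).
  by split; [linear_form_tac.. | rewrite d_only // -!scalerAl].
have [al1 [al2 [ga [al1E al2E prodE gaE]]]] := resolvent_coeffs disc_0.
exists (9^-1 *: Ax al1 al2 ga), (Bx al1 al2 ga), (Cx al1 al2 ga).
split; [rewrite /Ax /Bx /Cx /=; linear_form_tac.. |].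
by rewrite -!scalerAl -(fcubic_resolvent_factor al1E al2E prodE gaE) scalerA mulVf ?scale1r // pnatr_eq0.
Qed.
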